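(* Let $k$ be a field and consider the graded algebras (with $\deg x=\deg y=1$) $A(p)=k\langle x,y\rangle/(xy^2-p^2y^2x,\ x^3y+px^2yx+p^2xyx^2+p^3yx^3)$ ($0\ne p\in k$); $B(p)=k\langle x,y\rangle/(xy^2+ip^2y^2x,\ x^3y+px^2yx+p^2xyx^2+p^3yx^3)$ ($0\ne p\in k$, $i\in k$, $i^2=-1$); $C(p)=k\langle x,y\rangle/(xy^2+pyxy+p^2y^2x,\ x^3y+jp^3yx^3)$ ($0\ne p\in k$, $j\in k$, $j^2-j+1=0$); $D(v,p)=k\langle x,y\rangle/(xy^2+vyxy+p^2y^2x,\ x^3y+(v+p)x^2yx+(p^2+pv)xyx^2+p^3yx^3)$ ($v,p\in k$, $p\ne0$). Two algebras from this list are isomorphic (as graded algebras) if and only if their defining relations (the displayed degree-3 relation and degree-4 relation, as elements of $k\langle x,y\rangle$) are the same. *)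

From mathcomp Require Import all_boot all_algebra.
Set Implicit Arguments. Unset Strict Implicit. Unset Printing Implicit Defensive.
Import GRing.Theory.
Local Open Scope ring_scope.

(* Free algebra k<x,y>: words over {x,y}, encoded as seq bool
   (false = x, true = y).  Elements of the
   (polynomial) free algebra are those with finite support; all objects
   below that matter (homogeneous elements, ideal elements) are such. *)
Definition word := seq bool.
Definition X : bool := false.
Definition Y : bool := true.

Section NC.
Variable k : fieldType.

Definition ncs := word -> k.
Definition nc_add (f g : ncs) : ncs := fun w => f w + g w.
Definition nc_sub (f g : ncs) : ncs := fun w => f w - g w.
Definition nc_scale (a : k) (f : ncs) : ncs := fun w => a * f w.
Definition nc_mul (f g : ncs) : ncs :=
  fun w => \sum_(i < (size w).+1) f (take i w) * g (drop i w).
Definition nc_one : ncs := fun w => (w == [::])%:R.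
Definition nc_mono (u : word) : ncs := fun w => (w == u)%:R.
Definition nc_of (l : seq (k * word)) : ncs :=
  fun w => \sum_(t <- l) t.1 * (t.2 == w)%:R.

Definition homog (n : nat) (f : ncs) : Prop :=
  forall w, f w != 0 -> size w = n.

Definition ideal_gen (rs : seq ncs) (f : ncs) : Prop :=
  exists L : seq (word * nat * word * k),
    forall w, f w = \sum_(t <- L)
      t.2 * nc_mul (nc_mul (nc_mono t.1.1.1) (nth (fun _ => 0) rs t.1.1.2))
                   (nc_mono t.1.2) w.

(* k<x,y>/I and k<x,y>/J (I, J graded ideals) are isomorphic as graded
   k-algebras: there are maps Psi n on degree-n representatives that are
   k-linear, induce well-defined bijections (k<x,y>/I)_n -> (k<x,y>/J)_n,
   and are multiplicative and unital modulo J. *)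
Definition graded_iso (I J : ncs -> Prop) : Prop :=
  exists Psi : nat -> ncs -> ncs,
     (forall n f, homog n f -> homog n (Psi n f)) /\
      (forall n a f g, homog n f -> homog n g ->
         Psi n (nc_add (nc_scale a f) g) =1 nc_add (nc_scale a (Psi n f)) (Psi n g)) /\
      (forall n f, homog n f -> (I f <-> J (Psi n f))) /\
      (forall n g, homog n g -> exists2 f, homog n f & J (nc_sub (Psi n f) g)) /\
      (forall m n f g, homog m f -> homog n g ->
         J (nc_sub (Psi (m + n)%N (nc_mul f g)) (nc_mul (Psi m f) (Psi n g)))) /\
      J (nc_sub (Psi 0%N nc_one) nc_one).

End NC.

Inductive member (k : Type) :=
| MA of k
| MB of k
| MC of k
| MD of k & k.

Section Members.
Variable k : fieldType.

Definition valid (i j : k) (m : member k) : Prop :=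
  match m with
  | MA p => p != 0
  | MB p => p != 0 /\ i ^+ 2 = -1
  | MC p => p != 0 /\ j ^+ 2 - j + 1 = 0
  | MD v p => p != 0
  end.

Definition rel3 (i j : k) (m : member k) : ncs k :=
  match m with
  | MA p => nc_of [:: (1, [:: X; Y; Y]); (- p ^+ 2, [:: Y; Y; X])]
  | MB p => nc_of [:: (1, [:: X; Y; Y]); (i * p ^+ 2, [:: Y; Y; X])]
  | MC p => nc_of [:: (1, [:: X; Y; Y]); (p, [:: Y; X; Y]); (p ^+ 2, [:: Y; Y; X])]
  | MD v p => nc_of [:: (1, [:: X; Y; Y]); (v, [:: Y; X; Y]); (p ^+ 2, [:: Y; Y; X])]
  end.

Definition rel4 (i j : k) (m : member k) : ncs k :=
  match m with
  | MA p | MB p => nc_of [:: (1, [:: X; X; X; Y]); (p, [:: X; X; Y; X]);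
                            (p ^+ 2, [:: X; Y; X; X]); (p ^+ 3, [:: Y; X; X; X])]
  | MC p => nc_of [:: (1, [:: X; X; X; Y]); (j * p ^+ 3, [:: Y; X; X; X])]
  | MD v p => nc_of [:: (1, [:: X; X; X; Y]); (v + p, [:: X; X; Y; X]);
                       (p ^+ 2 + p * v, [:: X; Y; X; X]); (p ^+ 3, [:: Y; X; X; X])]
  end.

Definition rel_ideal (i j : k) (m : member k) : ncs k -> Prop :=
  ideal_gen [:: rel3 i j m; rel4 i j m].
End Members.

From mathcomp Require Import all_boot all_algebra ring zify.
From Stdlib Require Import FunctionalExtensionality.
Set Implicit Arguments. Unset Strict Implicit. Unset Printing Implicit Defensive.
Import GRing.Theory.
Local Open Scope ring_scope.

(* Every algebra of the list is presented by relations
     xy^2 + v yxy + s y^2x   and   x^3y + a x^2yx + b xyx^2 + c yx^3,  s <> 0,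
   so it suffices to show that a graded isomorphism forces equal (v, s, a, b, c).
   Modulo the target ideal J, a graded isomorphism sends each monomial to the same
   monomial in the images x |-> Ax + By, y |-> Cx + Dy of the generators, and
   AD - BC <> 0 because the source ideal has no elements of degree 1.  In degree <= 4,
   J is visible only as: nothing in degree <= 2, multiples of the cubic relation in
   degree 3 and, on the degree-4 words with a single y, multiples of the quartic
   relation.  The coefficients of x^3 and x^2y in the image of the source cubic
   relation force C = 0.  On the relevant words the images of the source cubic and
   quartic relations are then A D^2 and A^3 D times these relations, and comparing
   with multiples of the target relations gives the claim. *)

Section FreeAlgebra.
Variable k : fieldType.
Implicit Types (f g h r : ncs k) (u v w : word).

Lemma homog_eq0 n f w : homog n f -> size w != n -> f w = 0.
Proof. by move=> hf; apply: contraTeq => /hf ->; rewrite eqxx. Qed.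

Lemma homog0 n : homog n (fun _ => 0 : k).
Proof. by move=> w; rewrite eqxx. Qed.

Lemma homog_nc_mono u : @homog k (size u) (nc_mono k u).
Proof. by move=> w; rewrite /nc_mono; case: (w =P u) => [->|]; rewrite ?eqxx. Qed.
Arguments homog_nc_mono u : clear implicits.

Lemma nc_of_supp (l : seq (k * word)) w : nc_of l w != 0 -> w \in map snd l.
Proof.
apply: contraR => wl; rewrite /nc_of big1_seq // => t /andP[_ tl].
have /negPf-> : t.2 != w by apply: contraNneq wl => <-; exact: map_f.
by rewrite mulr0.
Qed.

Lemma homog_nc_of (n : nat) (l : seq (k * word)) :
  all (fun t => size t.2 == n) l -> homog n (nc_of l).
Proof.
move=> /allP hl w /nc_of_supp /mapP[t tl ->]; exact/eqP/hl.
Qed.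

Lemma nc_of_nil : nc_of (k := k) [::] = (fun _ => 0).
Proof. by apply: functional_extensionality => w; rewrite /nc_of big_nil. Qed.

Lemma nc_of_cons (t : k * word) l :
  nc_of (t :: l) = nc_add (nc_scale t.1 (nc_mono k t.2)) (nc_of l).
Proof.
apply: functional_extensionality => w.
by rewrite /nc_of big_cons /nc_add /nc_scale /nc_mono eq_sym.
Qed.

Lemma nc_mul_subr h f g : nc_mul h (nc_sub f g) =1 nc_sub (nc_mul h f) (nc_mul h g).
Proof.
by move=> w; rewrite /nc_mul /nc_sub -sumrB; apply: eq_bigr => i _; rewrite mulrBr.
Qed.

Lemma nc_mul_homogl n h g w : homog n h ->
  nc_mul h g w = if (n <= size w)%N then h (take n w) * g (drop n w) else 0.
Proof.
move=> hh; rewrite /nc_mul.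
have h0 (i : 'I_(size w).+1) : val i != n -> h (take i w) * g (drop i w) = 0.
  move=> ne; rewrite (homog_eq0 hh) ?mul0r // size_takel //.
  by rewrite -ltnS ltn_ord.
case: (leqP n (size w)) => hn.
- have hn' : (n < (size w).+1)%N by rewrite ltnS.
  by rewrite (bigD1 (Ordinal hn')) //= big1 ?addr0.
- rewrite big1 // => i _; apply: h0; apply: contraTneq hn => <-.
  by rewrite -leqNgt -ltnS ltn_ord.
Qed.

Lemma nc_mul_homogr n h g w : homog n g ->
  nc_mul h g w = if (n <= size w)%N
    then h (take (size w - n) w) * g (drop (size w - n) w) else 0.
Proof.
move=> hg; rewrite /nc_mul.
have g0 (i : 'I_(size w).+1) : val i != (size w - n)%N ->
    h (take i w) * g (drop i w) = 0.
  move=> ne; rewrite (homog_eq0 hg) ?mulr0 // size_drop.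
  by apply: contraNneq ne => <-; rewrite subKn // -ltnS ltn_ord.
case: (leqP n (size w)) => hn.
- have hn' : (size w - n < (size w).+1)%N by rewrite ltnS leq_subr.
  by rewrite (bigD1 (Ordinal hn')) //= big1 ?addr0.
- rewrite big1 // => i _; rewrite (homog_eq0 hg) ?mulr0 // size_drop.
  by apply: contraTneq hn => <-; rewrite -leqNgt leq_subr.
Qed.

Lemma nc_mul_homog1l h g w : homog 1 h ->
  nc_mul h g w = if w is a :: w' then h [:: a] * g w' else 0.
Proof.
by move=> hh; rewrite (nc_mul_homogl _ _ hh); case: w => //= a w; rewrite take0 drop0.
Qed.

Lemma nc_mono_cons a u : nc_mono k (a :: u) = nc_mul (nc_mono k [:: a]) (nc_mono k u).
Proof.
apply: functional_extensionality => w.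
rewrite (nc_mul_homog1l _ _ (homog_nc_mono [:: a])).
case: w => [|b w] //=; rewrite /nc_mono !eqseq_cons andbT.
by case: (b == a); rewrite ?mul1r ?mul0r.
Qed.

Definition nc_term u r v : ncs k := nc_mul (nc_mul (nc_mono k u) r) (nc_mono k v).

Lemma nc_term_nil r : nc_term [::] r [::] =1 r.
Proof.
move=> w; rewrite /nc_term (nc_mul_homogr _ _ (homog_nc_mono [::])) subn0.
rewrite take_size drop_size (nc_mul_homogl _ _ (homog_nc_mono [::])) take0 drop0.
by rewrite /nc_mono !eqxx mul1r mulr1.
Qed.

Lemma nc_term_supp u r v w : nc_term u r v w != 0 ->
  exists2 w', r w' != 0 & size w = (size u + size w' + size v)%N /\
                          (count_mem Y w' <= count_mem Y w)%N.
Proof.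
rewrite /nc_term (nc_mul_homogr _ _ (homog_nc_mono v)).
case: leqP => hv; last by rewrite eqxx.
rewrite (nc_mul_homogl _ _ (homog_nc_mono u)).
case: leqP => hu; last by rewrite !mul0r eqxx.
set w' := drop _ _ => nz; exists w'.
  by apply: contraNneq nz => ->; rewrite mulr0 mul0r.
split; first by move: hu; rewrite /w' size_drop !size_takel ?leq_subr //; lia.
rewrite -[X in (_ <= count_mem Y X)%N](cat_take_drop (size w - size v)) count_cat.
rewrite -[X in (_ <= count_mem Y X + _)%N](cat_take_drop (size u)) count_cat.
exact: leq_trans (leq_addl _ _) (leq_addr _ _).
Qed.

Lemma ideal_gen_eq0 (rs : seq (ncs k)) f : f =1 (fun _ => 0) -> ideal_gen rs f.
Proof. by move=> f0; exists [::] => w; rewrite f0 big_nil. Qed.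

Lemma ideal_gen_nth (rs : seq (ncs k)) n : ideal_gen rs (nth (fun _ => 0) rs n).
Proof.
by exists [:: ([::], n, [::], 1)] => w; rewrite big_seq1 mul1r -/(nc_term _ _ _) nc_term_nil.
Qed.

End FreeAlgebra.

Arguments homog_nc_mono {k} u.

Section IdealShadow.
Variables (k : fieldType) (r3 r4 : ncs k).
Implicit Types (f g h : ncs k) (w : word).

Hypothesis r3_supp : forall w, r3 w != 0 -> size w = 3 /\ count_mem Y w = 2.
Hypothesis r4_supp : forall w, r4 w != 0 -> size w = 4 /\ count_mem Y w = 1.

(* What membership in the ideal generated by [r3] and [r4] determines in degree
   <= 3 and on the degree-4 words with exactly one y. *)
Definition ideal_shadow f :=
  [/\ forall w, (size w <= 2)%N -> f w = 0,
      exists e, forall w, size w = 3 -> f w = e * r3 w &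
      exists e, forall w, size w = 4 -> count_mem Y w = 1 -> f w = e * r4 w].

Lemma ideal_shadow_eq f g : ideal_shadow f -> f =1 g -> ideal_shadow g.
Proof.
move=> [f_low [e3 f3] [e4 f4]] fg; split.
- by move=> w hw; rewrite -fg f_low.
- by exists e3 => w hw; rewrite -fg f3.
- by exists e4 => w hw hY; rewrite -fg f4.
Qed.

Lemma ideal_shadow0 : ideal_shadow (fun _ => 0).
Proof. by split=> //; exists 0 => *; rewrite mul0r. Qed.

Lemma ideal_shadow_lin a f g : ideal_shadow f -> ideal_shadow g ->
  ideal_shadow (fun w => a * f w + g w).
Proof.
move=> [f_low [e3 f3] [e4 f4]] [g_low [e3' g3] [e4' g4]]; split.
- by move=> w hw; rewrite f_low // g_low // mulr0 addr0.
- by exists (a * e3 + e3') => w hw; rewrite f3 // g3 // mulrDl mulrA.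
- by exists (a * e4 + e4') => w hw hY; rewrite f4 // g4 // mulrDl mulrA.
Qed.

Lemma ideal_shadow_sum (T : Type) (l : seq T) (c : T -> k) (F : T -> ncs k) :
  (forall t, ideal_shadow (F t)) ->
  ideal_shadow (fun w => \sum_(t <- l) c t * F t w).
Proof.
move=> hF; elim: l => [|t l IH].
  by apply: ideal_shadow_eq ideal_shadow0 _ => w; rewrite big_nil.
by apply: ideal_shadow_eq (ideal_shadow_lin (c t) (hF t) IH) _ => w; rewrite big_cons.
Qed.

Lemma ideal_shadow_vanish f :
  (forall w, (size w <= 3)%N -> f w = 0) ->
  (forall w, size w = 4 -> count_mem Y w = 1 -> f w = 0) -> ideal_shadow f.
Proof.
move=> f_low f4; split; first by move=> w hw; rewrite f_low // (leq_trans hw).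
- by exists 0 => w hw; rewrite f_low ?hw // mul0r.
- by exists 0 => w hw hY; rewrite f4 // mul0r.
Qed.

Lemma r3_eq0 w : (size w != 3) || (count_mem Y w != 2) -> r3 w = 0.
Proof. by apply: contraTeq => /r3_supp[-> ->]. Qed.

Lemma r4_eq0 w : (size w != 4) || (count_mem Y w != 1) -> r4 w = 0.
Proof. by apply: contraTeq => /r4_supp[-> ->]. Qed.

Lemma ideal_shadow_r3 : ideal_shadow r3.
Proof.
split; first by move=> w hw; rewrite r3_eq0 //; apply/orP; left; lia.
- by exists 1 => w _; rewrite mul1r.
- by exists 0 => w _ hY; rewrite mul0r r3_eq0 // hY orbT.
Qed.

Lemma ideal_shadow_r4 : ideal_shadow r4.
Proof.
split; first by move=> w hw; rewrite r4_eq0 //; apply/orP; left; lia.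
- by exists 0 => w hw; rewrite mul0r r4_eq0 // hw.
- by exists 1 => w _ _; rewrite mul1r.
Qed.

Lemma ideal_shadow_term u n v :
  ideal_shadow (nc_term u (nth (fun _ => 0) [:: r3; r4] n) v).
Proof.
case: u => [|a u]; case: v => [|b v].
- apply: ideal_shadow_eq _ (fun w => esym (nc_term_nil _ w)).
  case: n => [|[|n]] /=; [exact: ideal_shadow_r3 | exact: ideal_shadow_r4 |].
  by rewrite nth_nil; exact: ideal_shadow0.
all: apply: ideal_shadow_vanish => [w hw|w hw hY]; apply/eqP/negPn/negP.
all: case/nc_term_supp => w' + [hsize hcount].
all: case: n => [|[|n]] /=; [move/r3_supp | move/r4_supp | by rewrite nth_nil eqxx].
all: move=> w_supp; simpl in *; lia.
Qed.

Lemma ideal_gen_shadow f : ideal_gen [:: r3; r4] f -> ideal_shadow f.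
Proof.
case=> L fL; apply: ideal_shadow_eq (fun w => esym (fL w)).
exact: ideal_shadow_sum (fun t => ideal_shadow_term t.1.1.1 t.1.1.2 t.1.2).
Qed.

Lemma ideal_shadow_mul1l h f : homog 1 h -> ideal_shadow f ->
  ideal_shadow (nc_mul h f).
Proof.
move=> hh [f_low [e3 f3] _].
apply: ideal_shadow_vanish => [w hw|w hw hY]; rewrite nc_mul_homog1l //.
- by case: w hw => [|a w] //= hw; rewrite f_low ?mulr0.
- case: w hw hY => [|a w] //= [hw] hY; rewrite f3 // r3_eq0 ?mulr0 ?mul0r //.
  by apply/orP; right; move: hY; case: a => /=; lia.
Qed.

End IdealShadow.

Section Substitution.
Variables (k : fieldType) (Z : bool -> ncs k).

(* The coefficient of [w] in the image of the monomial [u] under [x_a |-> Z a];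
   this reading is only valid when every [Z a] is homogeneous of degree 1. *)
Fixpoint nc_subst u w : k :=
  match u, w with
  | [::], [::] => 1
  | a :: u', b :: w' => Z a [:: b] * nc_subst u' w'
  | _, _ => 0
  end.

Lemma nc_subst_cons a u : homog 1 (Z a) ->
  nc_subst (a :: u) =1 nc_mul (Z a) (nc_subst u).
Proof. by move=> hZ [|b w]; rewrite nc_mul_homog1l. Qed.

End Substitution.

Definition gen_image (k : fieldType) (Psi : nat -> ncs k -> ncs k) a : ncs k :=
  Psi 1%N (nc_mono k [:: a]).

Lemma det2_neq0 (k : fieldType) (A B C D : k) :
  (forall a b, a * A + b * C = 0 -> a * B + b * D = 0 -> a = 0 /\ b = 0) ->
  A * D - B * C != 0.
Proof.
move=> inj; apply/eqP => det0.
have [D0 B0] : D = 0 /\ - B = 0 by apply: inj; [rewrite -det0|]; ring.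
have [C0 A0] : C = 0 /\ - A = 0 by apply: inj; [|rewrite -oppr0 -det0]; ring.
have [] := inj 0 1; rewrite ?C0 ?D0; try ring.
by move=> _ /eqP; rewrite oner_eq0.
Qed.

Section GradedIsoMap.
Variables (k : fieldType) (I : ncs k -> Prop) (r3 r4 : ncs k).
Variable Psi : nat -> ncs k -> ncs k.
Implicit Types (f g : ncs k) (w : word).

Hypothesis r3_supp : forall w, r3 w != 0 -> size w = 3 /\ count_mem Y w = 2.
Hypothesis r4_supp : forall w, r4 w != 0 -> size w = 4 /\ count_mem Y w = 1.
Hypothesis I_low : forall f w, I f -> (size w <= 2)%N -> f w = 0.

Let J := ideal_gen [:: r3; r4].
Let Z := gen_image Psi.

Hypothesis Psi_homog : forall n f, homog n f -> homog n (Psi n f).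
Hypothesis Psi_lin : forall n a f g, homog n f -> homog n g ->
  Psi n (nc_add (nc_scale a f) g) =1 nc_add (nc_scale a (Psi n f)) (Psi n g).
Hypothesis Psi_ideal : forall n f, homog n f -> (I f <-> J (Psi n f)).
Hypothesis Psi_mul : forall m n f g, homog m f -> homog n g ->
  J (nc_sub (Psi (m + n)%N (nc_mul f g)) (nc_mul (Psi m f) (Psi n g))).
Hypothesis Psi_one : J (nc_sub (Psi 0%N (nc_one k)) (nc_one k)).

Let J_shadow f : J f -> ideal_shadow r3 r4 f := @ideal_gen_shadow k r3 r4 r3_supp r4_supp f.

Lemma Psi_zero n : Psi n (fun _ => 0) =1 (fun _ => 0).
Proof.
move=> w; have := Psi_lin 1 (homog0 n) (homog0 n) w.
have -> : nc_add (nc_scale 1 (fun _ => 0)) (fun _ => 0) = (fun _ : word => 0 : k).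
  by apply: functional_extensionality => u; rewrite /nc_add /nc_scale mulr0 addr0.
by rewrite /nc_add /nc_scale mul1r -{1}[Psi n _ w]addr0 => /addrI <-.
Qed.

Lemma Psi_nc_of n (l : seq (k * word)) : all (fun t => size t.2 == n) l ->
  Psi n (nc_of l) =1 (fun w => \sum_(t <- l) t.1 * Psi n (nc_mono k t.2) w).
Proof.
elim: l => [_ w|t l IH /= /andP[/eqP ht hl] w].
  by rewrite nc_of_nil Psi_zero big_nil.
rewrite nc_of_cons Psi_lin; [|by rewrite -ht; exact: homog_nc_mono|exact: homog_nc_of].
by rewrite /nc_add /nc_scale IH // big_cons.
Qed.

Lemma Psi_mono_shadow u :
  ideal_shadow r3 r4 (nc_sub (Psi (size u) (nc_mono k u)) (nc_subst Z u)).
Proof.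
elim: u => [|a u IH].
  by apply: ideal_shadow_eq (J_shadow Psi_one) _ => -[|b w].
have hZ : homog 1 (Z a) := Psi_homog (homog_nc_mono [:: a]).
have := J_shadow (Psi_mul (homog_nc_mono [:: a]) (homog_nc_mono u)).
rewrite -nc_mono_cons add1n => hstep.
apply: ideal_shadow_eq (ideal_shadow_lin 1 hstep (ideal_shadow_mul1l r3_supp hZ IH)) _.
by move=> w; rewrite nc_mul_subr /nc_sub nc_subst_cons // mul1r addrA subrK.
Qed.

Lemma nc_subst_rel_shadow n (l : seq (k * word)) :
  all (fun t => size t.2 == n) l -> I (nc_of l) ->
  ideal_shadow r3 r4 (fun w => \sum_(t <- l) t.1 * nc_subst Z t.2 w).
Proof.
move=> hl /(Psi_ideal (homog_nc_of hl))/J_shadow hPsi.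
have hdiff := ideal_shadow_sum l (fun t => t.1) (fun t => Psi_mono_shadow t.2).
apply: ideal_shadow_eq (ideal_shadow_lin (-1) hdiff hPsi) _ => w.
rewrite Psi_nc_of // mulN1r -sumrN -big_split /=.
apply: eq_big_seq => t /(allP hl)/eqP sz; rewrite /nc_sub sz; ring.
Qed.

Lemma gen_image_det :
  Z X [:: X] * Z Y [:: Y] - Z X [:: Y] * Z Y [:: X] != 0.
Proof.
have Z0 c w : size w != 1%N -> Psi 1 (nc_mono k [:: c]) w = 0.
  exact: homog_eq0 (Psi_homog (homog_nc_mono [:: c])).
apply: det2_neq0 => a b hX hY.
pose l := [:: (a, [:: X]); (b, [:: Y])].
have hl : all (fun t => size t.2 == 1%N) l by [].
have /I_low l0 : I (nc_of l).
  apply/(Psi_ideal (homog_nc_of hl))/ideal_gen_eq0 => w.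
  rewrite Psi_nc_of // !big_cons big_nil addr0 /=.
  case: w => [|[] [|c w]]; [| exact: hY | | exact: hX |];
    by rewrite !Z0 ?mulr0 ?addr0.
move: (l0 [:: X] isT) (l0 [:: Y] isT).
by rewrite /nc_of !big_cons !big_nil /= mulr1 mulr0 !addr0 mulr0 add0r mulr1 => -> ->.
Qed.

End GradedIsoMap.

Lemma graded_iso_refl (k : fieldType) (rs : seq (ncs k)) :
  graded_iso (ideal_gen rs) (ideal_gen rs).
Proof.
have sub_self g : ideal_gen rs (nc_sub g g).
  by apply: ideal_gen_eq0 => w; rewrite /nc_sub subrr.
exists (fun _ f => f); do !split=> //.
by move=> n g hg; exists g.
Qed.

Section StandardForm.
Variable k : fieldType.

Definition rel3_terms (v s : k) : seq (k * word) :=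
  [:: (1, [:: X; Y; Y]); (v, [:: Y; X; Y]); (s, [:: Y; Y; X])].

Definition rel4_terms (a b c : k) : seq (k * word) :=
  [:: (1, [:: X; X; X; Y]); (a, [:: X; X; Y; X]);
      (b, [:: X; Y; X; X]); (c, [:: Y; X; X; X])].

Definition std_ideal (v s a b c : k) : ncs k -> Prop :=
  ideal_gen [:: nc_of (rel3_terms v s); nc_of (rel4_terms a b c)].

Lemma rel3_terms_supp v s w :
  nc_of (rel3_terms v s) w != 0 -> size w = 3 /\ count_mem Y w = 2.
Proof. by move/nc_of_supp; rewrite !inE => /or3P[] /eqP ->. Qed.

Lemma rel4_terms_supp a b c w :
  nc_of (rel4_terms a b c) w != 0 -> size w = 4 /\ count_mem Y w = 1.
Proof. by move/nc_of_supp; rewrite !inE => /or4P[] /eqP ->. Qed.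

Lemma member_std_rels (i j : k) m : valid i j m ->
  exists v s a b c, [/\ s != 0, rel3 i j m = nc_of (rel3_terms v s)
                               & rel4 i j m = nc_of (rel4_terms a b c)].
Proof.
have nc_of_eq (l l' : seq (k * word)) : nc_of l =1 nc_of l' -> nc_of l = nc_of l'.
  exact: functional_extensionality.
case: m => [p|p|p|v p] /=.
- move=> p0; exists 0, (- p ^+ 2), p, (p ^+ 2), (p ^+ 3).
  by split; [rewrite oppr_eq0 expf_neq0 |
             apply: nc_of_eq => w; rewrite /nc_of !big_cons /=; ring..].
- move=> [p0 i2]; exists 0, (i * p ^+ 2), p, (p ^+ 2), (p ^+ 3).
  have i0 : i != 0.
    by apply: contra_eq_neq i2 => ->; rewrite expr0n eq_sym oppr_eq0 oner_eq0.
  by split; [rewrite mulf_neq0 ?expf_neq0 |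
             apply: nc_of_eq => w; rewrite /nc_of !big_cons /=; ring..].
- move=> [p0 _]; exists p, (p ^+ 2), 0, 0, (j * p ^+ 3).
  by split; [rewrite expf_neq0 |
             apply: nc_of_eq => w; rewrite /nc_of !big_cons /=; ring..].
- by move=> p0; exists v, (p ^+ 2), (v + p), (p ^+ 2 + p * v), (p ^+ 3); rewrite expf_neq0.
Qed.

(* The last two hypotheses say that the coefficients of x^3 and x^2y vanish in the
   image of xy^2 + v yxy + s y^2x under x |-> Ax + By, y |-> Cx + Dy. *)
Lemma cubic_subst_lower_triangular (A B C D v s : k) :
  s != 0 -> A * D - B * C != 0 ->
  A * C ^+ 2 * (1 + v + s) = 0 -> A * C * D * (1 + v) + s * C ^+ 2 * B = 0 ->
  C = 0.
Proof.
move=> s0 det xxx xxy; apply/eqP; apply: contraT => C0.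
have [vs0|vs0] := eqVneq (1 + v + s) 0.
  have : s * C * (B * C - A * D) = 0.
    have v_eq : 1 + v = - s by apply/eqP; rewrite -subr_eq0 opprK vs0.
    by rewrite -xxy v_eq; ring.
  by move/eqP; rewrite !mulf_eq0 (negPf s0) (negPf C0) subr_eq0 eq_sym -subr_eq0 (negPf det).
have A0 : A = 0.
  by apply/eqP; move/eqP: xxx; rewrite !mulf_eq0 (negPf C0) (negPf vs0) !orbF.
have B0 : B = 0.
  by apply/eqP; move/eqP: xxy; rewrite A0 !mul0r add0r !mulf_eq0 (negPf s0) (negPf C0).
by move: det; rewrite A0 B0 !mul0r subrr eqxx.
Qed.

Lemma std_coefs_eq_of_subst (Z : bool -> ncs k) (v1 s1 a1 b1 c1 v2 s2 a2 b2 c2 : k) :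
  s1 != 0 -> Z X [:: X] * Z Y [:: Y] - Z X [:: Y] * Z Y [:: X] != 0 ->
  (exists lam, forall w, size w = 3 ->
     \sum_(t <- rel3_terms v1 s1) t.1 * nc_subst Z t.2 w =
     lam * nc_of (rel3_terms v2 s2) w) ->
  (exists mu, forall w, size w = 4 -> count_mem Y w = 1 ->
     \sum_(t <- rel4_terms a1 b1 c1) t.1 * nc_subst Z t.2 w =
     mu * nc_of (rel4_terms a2 b2 c2) w) ->
  [/\ v1 = v2, s1 = s2, a1 = a2, b1 = b2 & c1 = c2].
Proof.
move=> s1nz + [lam e3] [mu e4].
move: (e3 [:: X; X; X] erefl) (e3 [:: X; X; Y] erefl) (e3 [:: X; Y; Y] erefl)
  (e3 [:: Y; X; Y] erefl) (e3 [:: Y; Y; X] erefl)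
  (e4 [:: X; X; X; Y] erefl erefl) (e4 [:: X; X; Y; X] erefl erefl)
  (e4 [:: X; Y; X; X] erefl erefl) (e4 [:: Y; X; X; X] erefl erefl).
rewrite /nc_of !big_cons !big_nil /= !mulr1 !mulr0 !addr0 !add0r.
move: (Z X [:: X]) (Z X [:: Y]) (Z Y [:: X]) (Z Y [:: Y]) => A B C D.
move=> xxx xxy xyy yxy yyx xxxy xxyx xyxx yxxx det.
have C0 : C = 0.
  apply: (cubic_subst_lower_triangular (v := v1) s1nz det).
    by rewrite -[RHS](mulr0 lam) -xxx; ring.
  by rewrite -[RHS](mulr0 lam) -xxy; ring.
rewrite C0 mulr0 subr0 in det.
have [A0 D0] : A != 0 /\ D != 0 by move: det; rewrite mulf_eq0 negb_or => /andP.
have lamE : lam = A * D ^+ 2 by rewrite -[lam]mulr1 -xyy C0; ring.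
have muE : mu = A ^+ 3 * D by rewrite -[mu]mulr1 -xxxy C0; ring.
have lam0 : lam != 0 by rewrite lamE mulf_neq0 ?expf_neq0.
have mu0 : mu != 0 by rewrite muE mulf_neq0 ?expf_neq0.
split; [apply: (mulfI lam0) | apply: (mulfI lam0) | apply: (mulfI mu0)..].
- by rewrite -yxy lamE C0; ring.
- by rewrite -yyx lamE C0; ring.
- by rewrite -xxyx muE C0; ring.
- by rewrite -xyxx muE C0; ring.
- by rewrite -yxxx muE C0; ring.
Qed.

Lemma std_rels_eq_of_graded_iso (v1 s1 a1 b1 c1 v2 s2 a2 b2 c2 : k) : s1 != 0 ->
  graded_iso (std_ideal v1 s1 a1 b1 c1) (std_ideal v2 s2 a2 b2 c2) ->
  [/\ v1 = v2, s1 = s2, a1 = a2, b1 = b2 & c1 = c2].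
Proof.
move=> s1nz [Psi [Phom [Plin [Pid [_ [Pmul Pone]]]]]].
have I_low f w : std_ideal v1 s1 a1 b1 c1 f -> (size w <= 2)%N -> f w = 0.
  case/(ideal_gen_shadow (@rel3_terms_supp v1 s1) (@rel4_terms_supp a1 b1 c1)).
  by move=> low _ _; exact: low.
have shadow := nc_subst_rel_shadow (@rel3_terms_supp v2 s2) (@rel4_terms_supp a2 b2 c2)
  Phom Plin Pid Pmul Pone.
have [_ e3 _] := shadow 3%N (rel3_terms v1 s1) isT (ideal_gen_nth _ 0).
have [_ _ e4] := shadow 4%N (rel4_terms a1 b1 c1) isT (ideal_gen_nth _ 1).
exact: std_coefs_eq_of_subst s1nz (gen_image_det I_low Phom Plin Pid) e3 e4.
Qed.

End StandardForm.

Theorem proposition7p12 (k : fieldType) (i j : k) (m1 m2 : member k) :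
  valid i j m1 -> valid i j m2 ->
  (graded_iso (rel_ideal i j m1) (rel_ideal i j m2) <->
   (rel3 i j m1 =1 rel3 i j m2 /\ rel4 i j m1 =1 rel4 i j m2)).
Proof.
move=> /member_std_rels[v1 [s1 [a1 [b1 [c1 [s1nz E31 E41]]]]]].
move=> /member_std_rels[v2 [s2 [a2 [b2 [c2 [_ E32 E42]]]]]].
rewrite /rel_ideal E31 E41 E32 E42; split.
  by case/(std_rels_eq_of_graded_iso s1nz) => -> -> -> -> ->.
case=> /functional_extensionality <- /functional_extensionality <-.
exact: graded_iso_refl.
Qed.
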